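(* Let $\delta=x^{\mathbf d}f(\theta)$ be a homogeneous differential operator on $R$ of degree $\mathbf d\neq\mathbf 0$ with $-\mathbf d\in S$ but $-\mathbf d$ not in the interior of $\sigma^\vee$. If $\delta$ fixes at least one nonzero monomial ideal of $R$, then $\delta$ fixes infinitely many distinct nonzero monomial ideals of $R$.
   Context: Let $\sigma\subseteq\mathbb R^d$ be a full-dimensional, strongly convex rational polyhedral cone, $S=\sigma^\vee\cap\mathbb Z^d$, $R=\mathbb C[S]$ with monomial basis $x^{\mathbf a}$, $\mathbf a\in S$. Let $h_1,\dots,h_n$ be the primitive support functions of the facets of $\sigma^\vee$ (so $S=\{\mathbf a\in\mathbb Z^d: h_i(\mathbf a)\ge 0\ \forall i\}$). $(g,m)!=\prod_{j=0}^m(g-j)$ for $m\ge0$, $=1$ for $m<0$; $H_{\mathbf d}=\prod_i(h_i,h_i(-\mathbf d)-1)!$. For $f\in\mathbb C[t_1,\dots,t_d]$ divisible by $H_{\mathbf d}$, $\delta=x^{\mathbf d}f(\theta)$ is the $\mathbb C$-linear map $R\to R$ with $\delta(x^{\mathbf a})=f(\mathbf a)x^{\mathbf a+\mathbf d}$. An ideal $I$ is $\delta$-fixed if $\delta(I)=I$. *)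

From mathcomp Require Import all_boot all_algebra.
From mathcomp Require Import Rstruct.
From mathcomp Require Import complex.
From mathcomp Require Import mpoly.

Set Implicit Arguments.
Unset Strict Implicit.
Unset Printing Implicit Defensive.

Import GRing.Theory Num.Theory.
Local Open Scope ring_scope.

Notation CC := (complex.complex Rdefinitions.R).

Notation Zd d := ('rV[int]_d).

Definition ev (d : nat) (h a : Zd d) : int := \sum_(j < d) h 0 j * a 0 j.

(* ---- The cone sigma^vee, given by the primitive facet support functions
   h_0, ..., h_(n-1).  sigma is full-dimensional and strongly convex,
   i.e. sigma^vee is strongly convex and full-dimensional. *)
Definition cone_data (d n : nat) (h : 'I_n -> Zd d) : Prop :=
  (exists a : Zd d, forall i, 0 < ev (h i) a) /\
  (forall a : Zd d, (forall i, ev (h i) a = 0) -> a = 0) /\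
  (forall i, \big[gcdz/0]_(j < d) h i 0 j = 1) /\
  (* each h_i defines a facet: the inequality h_i >= 0 is irredundant *)
  (forall i, exists a : Zd d,
      ev (h i) a < 0 /\ forall j, j != i -> 0 <= ev (h j) a).

Definition inS (d n : nat) (h : 'I_n -> Zd d) (a : Zd d) : Prop :=
  forall i, 0 <= ev (h i) a.

Definition in_interior (d n : nat) (h : 'I_n -> Zd d) (a : Zd d) : Prop :=
  forall i, 0 < ev (h i) a.

(* ---- The semigroup ring R = C[S].  An element is a finitely supported
   coefficient function S -> C (extended by 0 to Z^d); the monomial x^a is
   the indicator of a. *)
Definition fin_supp (d : nat) (g : Zd d -> CC) : Prop :=
  exists s : seq (Zd d), forall a, g a != 0 -> a \in s.

Definition inR (d n : nat) (h : 'I_n -> Zd d) (g : Zd d -> CC) : Prop :=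
  fin_supp g /\ forall a, g a != 0 -> inS h a.

Definition mono (d : nat) (a : Zd d) : Zd d -> CC :=
  fun c => if c == a then 1 else 0.

(* Product r * g in C[S], computed through any duplicate-free list s
   containing the support of r (the result does not depend on s). *)
Definition mulR (d : nat) (s : seq (Zd d)) (r g : Zd d -> CC) : Zd d -> CC :=
  fun c => \sum_(a <- s) r a * g (c - a).

Definition is_ideal (d n : nat) (h : 'I_n -> Zd d) (I : (Zd d -> CC) -> Prop)
  : Prop :=
  (forall g, I g -> inR h g) /\
  I (fun _ => 0) /\
  (forall g1 g2, I g1 -> I g2 -> I (fun c => g1 c + g2 c)) /\
  (forall r g (s : seq (Zd d)), inR h r -> uniq s ->
      (forall a, r a != 0 -> a \in s) -> I g -> I (mulR s r g)).

Definition ideal_gen (d n : nat) (h : 'I_n -> Zd d) (G : (Zd d -> CC) -> Prop)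
  (g : Zd d -> CC) : Prop :=
  forall J, is_ideal h J -> (forall x, G x -> J x) -> J g.

Definition monomial_ideal (d n : nat) (h : 'I_n -> Zd d)
  (I : (Zd d -> CC) -> Prop) : Prop :=
  is_ideal h I /\
  exists E : Zd d -> Prop, (forall a, E a -> inS h a) /\
    forall g, I g <-> ideal_gen h (fun x => exists2 a, E a & x = mono a) g.

Definition nonzero_ideal (d : nat) (I : (Zd d -> CC) -> Prop) : Prop :=
  exists g, I g /\ g <> (fun _ => 0).

Definition linpoly (d : nat) (h : Zd d) : {mpoly CC[d]} :=
  \sum_(j < d) (h 0 j)%:~R *: 'X_j.

Definition ffact (d : nat) (g : {mpoly CC[d]}) (m : int) : {mpoly CC[d]} :=
  if (0 <= m) then \prod_(j < `|m|%N.+1) (g - j%:R) else 1.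

Definition Hpoly (d n : nat) (h : 'I_n -> Zd d) (dd : Zd d) : {mpoly CC[d]} :=
  \prod_(i < n) ffact (linpoly (h i)) (ev (h i) (- dd) - 1).

Definition evalZ (d : nat) (f : {mpoly CC[d]}) (a : Zd d) : CC :=
  f.@[fun j => (a 0 j)%:~R].

(* delta = x^dd f(theta):  delta(x^a) = f(a) x^(a + dd), extended linearly *)
Definition delta (d : nat) (dd : Zd d) (f : {mpoly CC[d]}) (g : Zd d -> CC)
  : Zd d -> CC :=
  fun c => evalZ f (c - dd) * g (c - dd).

Definition delta_fixed (d : nat) (dd : Zd d) (f : {mpoly CC[d]})
  (I : (Zd d -> CC) -> Prop) : Prop :=
  forall g, I g <-> exists2 g', I g' & g = delta dd f g'.

Definition mdivides (d : nat) (p f : {mpoly CC[d]}) : Prop :=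
  exists q : {mpoly CC[d]}, f = q * p.

(* Take a monomial x^c0 of a delta-fixed monomial ideal I and a facet h_i of
   sigma^vee with h_i(-d) = 0, which exists because -d lies in S but not in the
   interior.  Since delta sends x^c to a multiple of x^(c+d) and h_i(c+d) = h_i(c),
   the part of I spanned by the monomials x^c with h_i(c) >= m is again a
   delta-fixed monomial ideal, for every integer m.  Moving c0 along an interior
   point a0 of sigma^vee makes h_i(c0 + k a0) strictly increasing in k, and the
   cut-offs at these levels give infinitely many distinct such ideals. *)
From mathcomp Require Import all_boot all_algebra.
From mathcomp Require Import Rstruct complex mpoly.
From Stdlib Require Import FunctionalExtensionality Classical.
Import GRing.Theory Num.Theory.
Import order.Order.TTheory.
Local Open Scope ring_scope.
Set Implicit Arguments.
Unset Strict Implicit.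

Lemma evD d (l a b : Zd d) : ev l (a + b) = ev l a + ev l b.
Proof. by rewrite /ev -big_split /=; apply: eq_bigr => j _; rewrite mxE mulrDr. Qed.

Lemma evN d (l a : Zd d) : ev l (- a) = - ev l a.
Proof. by rewrite /ev -sumrN; apply: eq_bigr => j _; rewrite mxE mulrN. Qed.

Lemma ev0 d (l : Zd d) : ev l 0 = 0.
Proof. by rewrite /ev big1 // => j _; rewrite mxE mulr0. Qed.

Lemma evMn d (l a : Zd d) k : ev l (a *+ k) = ev l a *+ k.
Proof. by elim: k => [|k IH]; rewrite ?mulr0n ?ev0 // !mulrS evD IH. Qed.

Lemma mono_self d (a : Zd d) : mono a a = 1.
Proof. by rewrite /mono eqxx. Qed.

Lemma mono_nz d (a c : Zd d) : mono a c != 0 -> c = a.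
Proof. by rewrite /mono; case: (c =P a) => // _; rewrite eqxx. Qed.

Lemma mono_neq0 d (a : Zd d) : mono a <> (fun _ => 0).
Proof. by move/(congr1 (fun g => g a)) => /eqP; rewrite mono_self oner_eq0. Qed.

Lemma mulR_mono d (a b : Zd d) : mulR [:: a] (mono a) (mono b) = mono (a + b).
Proof.
apply: functional_extensionality => c; rewrite /mulR big_seq1 mono_self mul1r.
rewrite /mono; congr (if _ then _ else _).
by apply/eqP/eqP => [<-|->]; [rewrite addrC subrK | rewrite [a + b]addrC addrK].
Qed.

Lemma mulR_nz d (s : seq (Zd d)) r g c : mulR s r g c != 0 ->
  exists2 a, a \in s & r a != 0 /\ g (c - a) != 0.
Proof.
rewrite /mulR => nz; case: (boolP (has (fun a => r a * g (c - a) != 0) s)).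
  by case/hasP=> a ins; rewrite mulf_eq0 negb_or => /andP[]; exists a.
move/hasPn=> H; move: nz; rewrite big1_seq ?eqxx // => a /andP[_ /H].
by rewrite negbK => /eqP.
Qed.

Lemma addf_neq0 (x y : CC) : x + y != 0 -> x != 0 \/ y != 0.
Proof. by have [->|] := eqVneq x 0; [rewrite add0r; right | left]. Qed.

Lemma funN0P (T : Type) (g : T -> CC) : g <> (fun _ => 0) -> exists c, g c != 0.
Proof.
move=> gN0; apply: NNPP => Hn; apply: gN0; apply: functional_extensionality => c.
by apply/eqP; apply: NNPP => gc; apply: Hn; exists c; apply/negP.
Qed.

Section SemigroupRing.

Variables (d n : nat) (h : 'I_n -> Zd d).

Lemma inS0 : inS h 0.
Proof. by move=> i; rewrite ev0. Qed.

Lemma inSD a b : inS h a -> inS h b -> inS h (a + b).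
Proof. by move=> Ha Hb i; rewrite evD addr_ge0. Qed.

Lemma inSMn a k : inS h a -> inS h (a *+ k).
Proof. by move=> Ha i; rewrite evMn mulrn_wge0. Qed.

Lemma inR0 : inR h (fun _ => 0).
Proof. by split; [exists [::] => c; rewrite eqxx | move=> c; rewrite eqxx]. Qed.

Lemma inR_mono a : inS h a -> inR h (mono a).
Proof.
move=> Sa; split; first by exists [:: a] => c /mono_nz ->; rewrite mem_seq1.
by move=> c /mono_nz ->.
Qed.

Lemma inRD g1 g2 : inR h g1 -> inR h g2 -> inR h (fun c => g1 c + g2 c).
Proof.
move=> [[s1 H1] S1] [[s2 H2] S2]; split; last by move=> c /addf_neq0 [/S1|/S2].
by exists (s1 ++ s2) => c /addf_neq0 [/H1|/H2] cs; rewrite mem_cat cs ?orbT.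
Qed.

Lemma inR_mul s r g : inR h r -> inR h g -> inR h (mulR s r g).
Proof.
move=> [_ Sr] [[sg Hg] Sg]; split.
  exists [seq a + b | a <- s, b <- sg] => c /mulR_nz [a ins [ra gca]].
  rewrite -(subrK a c) addrC.
  by apply/allpairsP; exists (a, c - a); rewrite /= ins Hg.
move=> c /mulR_nz [a _ [ra gca]]; rewrite -(subrK a c).
exact: inSD (Sg _ gca) (Sr _ ra).
Qed.

(* [upset P] says that P is an ideal of the semigroup S: exactly the exponent
   sets of monomial ideals. *)
Definition supported_in (P : Zd d -> Prop) (g : Zd d -> CC) : Prop :=
  inR h g /\ forall c, g c != 0 -> P c.

Definition upset (P : Zd d -> Prop) : Prop :=
  (forall c, P c -> inS h c) /\ (forall c a, P c -> inS h a -> P (c + a)).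

Lemma supported_in_ideal P : upset P -> is_ideal h (supported_in P).
Proof.
move=> [PS Pup]; split; first by move=> g [].
split; first by split; [exact: inR0 | move=> c; rewrite eqxx].
split.
  move=> g1 g2 [R1 P1] [R2 P2]; split; first exact: inRD.
  by move=> c /addf_neq0 [/P1|/P2].
move=> r g s Rr _ _ [Rg Pg]; split; first exact: inR_mul.
move=> c /mulR_nz [a _ [ra gca]]; rewrite -(subrK a c).
exact: Pup (Pg _ gca) (Rr.2 _ ra).
Qed.

Lemma supported_in_mono P c : upset P -> P c -> supported_in P (mono c).
Proof. by move=> [PS _] Pc; split; [exact: inR_mono (PS _ Pc) | move=> b /mono_nz ->]. Qed.

Section Ideal.

Variable J : (Zd d -> CC) -> Prop.
Hypothesis HJ : is_ideal h J.

Lemma ideal_upset : upset (fun c => J (mono c)).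
Proof.
case: HJ => [JR [_ [_ JM]]]; split.
  by move=> c /JR [_]; apply; rewrite mono_self oner_neq0.
move=> c a Jc Sa; rewrite addrC -mulR_mono; apply: JM => //; first exact: inR_mono.
by move=> b /mono_nz ->; rewrite mem_seq1.
Qed.

Lemma ideal_scale_mono x k : (k != 0 -> J (mono x)) -> J (fun c => k * mono x c).
Proof.
case: HJ => [_ [J0 [_ JM]]] Jx; have [->|kN0] := eqVneq k 0.
  congr J: J0; apply: functional_extensionality => c; by rewrite mul0r.
have -> : (fun c => k * mono x c) = mulR [:: 0] (fun a => k * mono 0 a) (mono x).
  by apply: functional_extensionality => c; rewrite /mulR big_seq1 mono_self mulr1 subr0.
have supp0 a : k * mono 0 a != 0 -> a = 0.
  by rewrite mulf_eq0 negb_or => /andP[_ /mono_nz].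
apply: JM; last exact: Jx.
- split; first by exists [:: 0] => a /supp0 ->; rewrite mem_seq1.
  by move=> a /supp0 ->; exact: inS0.
- by [].
- by move=> a /supp0 ->; rewrite mem_seq1.
Qed.

Lemma ideal_of_monomials g : inR h g -> (forall c, g c != 0 -> J (mono c)) -> J g.
Proof.
move=> [[s Hs] _] Jm.
have Jtrunc (t : seq (Zd d)) : J (fun c => if c \in t then g c else 0).
  elim: t => [|x t IH].
    by congr J: HJ.2.1.
  case: (boolP (x \in t)) => xt.
    congr J: IH; apply: functional_extensionality => c; rewrite in_cons.
    by case: (c =P x) => [->|]; rewrite ?xt.
  have -> : (fun c => if c \in x :: t then g c else 0) =
     (fun c => (fun c => g x * mono x c) c + (fun c => if c \in t then g c else 0) c).
    apply: functional_extensionality => c; rewrite in_cons /mono.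
    case: (c =P x) => [->|_] /=; first by rewrite (negbTE xt) mulr1 addr0.
    by rewrite mulr0 add0r.
  by apply: HJ.2.2.1 IH; apply: ideal_scale_mono; apply: Jm.
congr J: (Jtrunc s); apply: functional_extensionality => c.
by case: (boolP (c \in s)) => // cs; apply/esym/eqP; apply: contraR cs => /Hs.
Qed.

End Ideal.

Lemma supported_in_monomial P : upset P -> monomial_ideal h (supported_in P).
Proof.
move=> HP; split; first exact: supported_in_ideal.
exists P; split; first exact: HP.1.
move=> g; split.
  move=> [Rg Pg] J HJ HG; apply: (ideal_of_monomials HJ Rg) => c /Pg Pc.
  by apply: HG; exists c.
move=> Hg; apply: Hg; first exact: supported_in_ideal.
by move=> x [a Pa ->]; exact: supported_in_mono.
Qed.

Lemma monomial_ideal_mono I g c : monomial_ideal h I -> I g -> g c != 0 -> I (mono c).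
Proof.
move=> [HI [E [ES HE]]] /HE Ig.
have HQ := supported_in_ideal (ideal_upset HI).
case: (Ig _ HQ) => [x [e Ee ->]|_]; last by apply.
apply: supported_in_mono (ideal_upset HI) _.
by apply/HE => J _; apply; exists e.
Qed.

End SemigroupRing.

Section DeltaFixed.

Variables (d n : nat) (h : 'I_n -> Zd d) (dd : Zd d) (f : {mpoly CC[d]}).

(* The first hypothesis lets delta be inverted monomial by monomial: g is the
   image of c |-> g (c + dd) / f(c). *)
Lemma supported_in_delta_fixed P : upset h P -> inS h (- dd) ->
  (forall c, P c -> evalZ f (c - dd) != 0) ->
  (forall c, P c -> evalZ f c != 0 -> P (c + dd)) ->
  delta_fixed dd f (supported_in h P).
Proof.
move=> [PS Pup] Sd f_ne0 P_shift g; split.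
  move=> [[[s Hs] _] Pg]; exists (fun c => g (c + dd) / evalZ f c).
    have Pg' c : g (c + dd) / evalZ f c != 0 -> P c.
      rewrite mulf_eq0 negb_or => /andP[/Pg Pc _].
      by have := Pup _ _ Pc Sd; rewrite addrK.
    split=> //; split; last by move=> c /Pg'/PS.
    exists [seq x - dd | x <- s] => c nz; apply/mapP; exists (c + dd); last by rewrite addrK.
    by apply: Hs; move: nz; rewrite mulf_eq0 negb_or => /andP[].
  apply: functional_extensionality => c; rewrite /delta subrK.
  have [->|nz] := eqVneq (g c) 0; first by rewrite mul0r mulr0.
  by rewrite mulrCA divff ?mulr1 //; apply/f_ne0/Pg.
move=> [g' [[[s Hs] _] Pg] ->].
have Pdelta c : delta dd f g' c != 0 -> P c.
  rewrite /delta mulf_eq0 negb_or => /andP[fz /Pg Pc].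
  by have := P_shift _ Pc fz; rewrite subrK.
split=> //; split; last by move=> c /Pdelta/PS.
exists [seq x + dd | x <- s] => c nz; apply/mapP; exists (c - dd); last by rewrite subrK.
by apply: Hs; move: nz; rewrite /delta mulf_eq0 negb_or => /andP[].
Qed.

Variable I : (Zd d -> CC) -> Prop.
Hypothesis HF : delta_fixed dd f I.

Lemma delta_fixed_preimage c : I (mono c) -> evalZ f (c - dd) != 0.
Proof.
move=> /HF [g' _ /(congr1 (fun F => F c))].
rewrite /delta mono_self => E; apply: contra_eq_neq E => ->.
by rewrite mul0r oner_neq0.
Qed.

Lemma delta_fixed_image c : monomial_ideal h I ->
  I (mono c) -> evalZ f c != 0 -> I (mono (c + dd)).
Proof.
move=> HI Ic fz; have Id : I (delta dd f (mono c)) by apply/HF; exists (mono c).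
by apply: (monomial_ideal_mono HI Id); rewrite /delta addrK mono_self mulr1.
Qed.

Definition cutoff (l : Zd d) (m : int) (c : Zd d) : Prop :=
  I (mono c) /\ m <= ev l c.

Lemma cutoff_upset l m : is_ideal h I -> (forall a, inS h a -> 0 <= ev l a) ->
  upset h (cutoff l m).
Proof.
move=> HI lS; have [IS Iup] := ideal_upset HI; split; first by move=> c [/IS].
move=> c a [Ic mc] Sa; split; first exact: Iup.
by rewrite evD (le_trans mc) // lerDl lS.
Qed.

Lemma cutoff_delta_fixed l m : monomial_ideal h I -> inS h (- dd) ->
  (forall a, inS h a -> 0 <= ev l a) -> ev l dd = 0 ->
  delta_fixed dd f (supported_in h (cutoff l m)).
Proof.
move=> HI Sd lS ldd; apply: supported_in_delta_fixed => //.
- exact: cutoff_upset HI.1 lS.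
- by move=> c [Ic _]; exact: delta_fixed_preimage.
- move=> c [Ic mc] fz; split; first exact: delta_fixed_image.
  by rewrite evD ldd addr0.
Qed.

End DeltaFixed.

Lemma facet_through d n (h : 'I_n -> Zd d) a :
  inS h a -> ~ in_interior h a -> exists i, ev (h i) a = 0.
Proof.
move=> Sa /(not_all_ex_not _ _) [i Hi]; exists i.
by apply/eqP; rewrite eq_le Sa andbT leNgt; apply/negP.
Qed.

Theorem mainTheorem13 (d n : nat) (h : 'I_n -> 'rV[int]_d)
  (hcone : cone_data h)
  (dd : 'rV[int]_d) (f : {mpoly CC[d]})
  (hf : mdivides (Hpoly h dd) f)
  (hdd0 : dd != 0)
  (hdS : inS h (- dd))
  (hdint : ~ in_interior h (- dd))
  (hfix : exists I, monomial_ideal h I /\ nonzero_ideal I /\ delta_fixed dd f I) :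
  exists Is : nat -> ('rV[int]_d -> CC) -> Prop,
    (forall k, monomial_ideal h (Is k) /\ nonzero_ideal (Is k) /\
               delta_fixed dd f (Is k)) /\
    (forall k l, k <> l -> exists g, ~ (Is k g <-> Is l g)).
Proof.
case: hfix => I [HI [[g [Ig /funN0P [c0 gc0]]] HF]].
have [i hi_dd] : exists i, ev (h i) dd = 0.
  case: (facet_through hdS hdint) => i.
  by rewrite evN => /eqP; rewrite oppr_eq0 => /eqP; exists i.
have [[a0 a0_int] _] := hcone.
have [IS Iup] := ideal_upset HI.1.
pose b k := c0 + a0 *+ k.
have Ib k : I (mono (b k)).
  by apply: Iup (monomial_ideal_mono HI Ig gc0) _; apply: inSMn => j; apply: ltW.
pose Is k := supported_in h (cutoff I (h i) (ev (h i) (b k))).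
have cut_up k : upset h (cutoff I (h i) (ev (h i) (b k))).
  exact: cutoff_upset HI.1 (fun a Sa => Sa i).
have Is_b k : Is k (mono (b k)) by apply: supported_in_mono (cut_up k) _; split.
have Is_b_lt k l : (k < l)%N -> ~ Is l (mono (b k)).
  move=> kl [_ /(_ (b k))]; rewrite mono_self oner_neq0 => /(_ isT) [_].
  rewrite /b !evD !evMn lerD2l -(subnKC (ltnW kl)) mulrnDr gerDl leNgt.
  by rewrite pmulrn_lgt0 ?subn_gt0 // a0_int.
exists Is; split=> [k|k l kl].
  split; first exact: supported_in_monomial (cut_up k).
  split; first by exists (mono (b k)); split; [exact: Is_b | exact: mono_neq0].
  exact: cutoff_delta_fixed HI hdS (fun a Sa => Sa i) hi_dd.
case: (ltngtP k l) => [lt|gt|eq] //.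
  by exists (mono (b k)) => E; apply: (Is_b_lt _ _ lt); apply/E.
by exists (mono (b l)) => E; apply: (Is_b_lt _ _ gt); apply/E.
Qed.
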